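(* For any input distribution $\mathcal{D}$, and any $n,k\ge1$, $p\in[0,1]$, there is a deterministic selection algorithm in the rank query model that runs in $k$ rounds, has success probability at least $p$, and issues at most $np\bigl(1-\frac{k-1}{2k}p\bigr)+1$ queries in expectation when the input is drawn from $\mathcal{D}$.
   Context: Selection with rank queries: there is a vector $\vec{x}=(x_1,\ldots,x_n)$ whose ranks form a permutation of $\{1,\ldots,n\}$; a rank $r\in\{1,\ldots,n\}$ is given and the goal is to output the index $i$ with $\mathrm{rank}(x_i)=r$. Queries have the form ''How is $\mathrm{rank}(x_j)$ compared to $m$?'', with answer ''$<$'', ''$=$'' or ''$>$''. An algorithm runs in $k$ rounds if in each of $k$ rounds it submits a set of queries chosen depending only on answers of earlier rounds, then receives all answers. An input distribution is a probability distribution over rank permutations (with $r$ given); the algorithm may depend on $\mathcal{D}$. *)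

From HB Require Import structures.
From mathcomp Require Import all_boot all_order all_algebra all_fingroup.
From mathcomp Require Import reals.
Set Implicit Arguments. Unset Strict Implicit. Unset Printing Implicit Defensive.
Import Order.TTheory GRing.Theory Num.Theory.

(* An input is a rank permutation s : 'S_n ; element x_j (j : 'I_n) has
   rank (s j).+1 \in {1,...,n}. *)

Inductive answer := ALt | AEq | AGt.

(* A query "how is rank(x_j) compared to m?" is the pair (j, m). *)
Definition query (n : nat) := ('I_n * nat)%type.

Definition answer_of (n : nat) (s : 'S_n) (q : query n) : answer :=
  let r := (s q.1).+1 in
  if r < q.2 then ALt else if r == q.2 then AEq else AGt.

(* A transcript: the list of completed rounds, each round being the list
   of (query, answer) pairs of that round. *)
Definition transcript (n : nat) := seq (seq (query n * answer)).

(* A deterministic multi-round algorithm: the set (list) of queries of the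
   next round is a function of the transcript of earlier rounds; the final
   output index is a function of the whole transcript. *)
Record algorithm (n : nat) := Algorithm {
  next_queries : transcript n -> seq (query n);
  output : transcript n -> 'I_n }.

Fixpoint run_rounds (n : nat) (A : algorithm n) (s : 'S_n) (t : nat)
  : transcript n :=
  match t with
  | 0 => [::]
  | t'.+1 =>
      let h := run_rounds A s t' in
      rcons h [seq (q, answer_of s q) | q <- next_queries A h]
  end.

Definition alg_output (n : nat) (A : algorithm n) (k : nat) (s : 'S_n) : 'I_n :=
  output A (run_rounds A s k).

Definition num_queries (n : nat) (A : algorithm n) (k : nat) (s : 'S_n) : nat :=
  sumn [seq size rd | rd <- run_rounds A s k].

(* Success on input s for target rank r (1-indexed). *)
Definition succeeds (n : nat) (A : algorithm n) (k r : nat) (s : 'S_n) : bool :=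
  (s (alg_output A k s)).+1 == r.

Definition is_distribution (R : realType) (n : nat) (D : {ffun 'S_n -> R}) :=
  (forall s, 0 <= D s)%R /\ (\sum_(s : 'S_n) D s = 1)%R.

Definition success_prob (R : realType) (n : nat) (D : {ffun 'S_n -> R})
  (A : algorithm n) (k r : nat) : R :=
  (\sum_(s : 'S_n) D s * (succeeds A k r s)%:R)%R.

Definition expected_queries (R : realType) (n : nat) (D : {ffun 'S_n -> R})
  (A : algorithm n) (k : nat) : R :=
  (\sum_(s : 'S_n) D s * (num_queries A k s)%:R)%R.

From HB Require Import structures.
From mathcomp Require Import all_boot all_order all_algebra all_fingroup.
From mathcomp Require Import reals.
From mathcomp Require Import zify ring lra.
Import Order.TTheory GRing.Theory Num.Theory.
Set Implicit Arguments. Unset Strict Implicit. Unset Printing Implicit Defensive.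

(* Sort the indices j by the probability that x_j has the target rank, most
   likely first, and ask the first m ~ np candidates, in k batches of
   c = ceil(m/k), whether they have that rank, stopping after the first hit;
   without a hit, output the (m+1)-st candidate.  As these probabilities are
   nonincreasing along the order, the first b candidates carry probability at
   least b/n.  Hence the success probability is at least (m+1)/n >= p, and the
   i-th query, issued only if the target is not among the first c*floor(i/c)
   candidates, is issued with probability at most 1 - c*floor(i/c)/n.  Summing
   over i < m gives the bound, since these batch starts add up to at least
   (k-1)m(m-1)/(2k). *)

Definition batch_start c i := i %/ c * c.

Lemma modnS_wrap m c : 0 < c ->
  m.+1 %% c = if (m %% c).+1 == c then 0 else (m %% c).+1.
Proof.
move=> c_gt0; rewrite -addn1 -modnDml addn1.
case: eqP => [->|ne_c]; first exact: modnn.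
by rewrite modn_small //; have := ltn_pmod m c_gt0; lia.
Qed.

Lemma double_sum_modn c m : 0 < c ->
  2 * \sum_(i < m) i %% c + m %% c * (c - m %% c) = m * c.-1.
Proof.
move=> c_gt0; elim: m => [|m IHm]; first by rewrite big_ord0 mod0n.
rewrite big_ord_recr /= modnS_wrap //.
have := ltn_pmod m c_gt0; move: IHm; move: (\sum_(i < m) _) (m %% c) => B r.
case: eqP => [<-|ne_rc] IHm lt_rc; first by move: IHm; rewrite subSnn; nia.
have [d def_c] : exists d, c = r.+2 + d by exists (c - r.+2); lia.
by move: IHm; rewrite def_c; nia.
Qed.

Lemma double_sum_ord m : 2 * \sum_(i < m) i = m * m.-1.
Proof.
rewrite -(@big_mkord _ _ _ m xpredT (fun i => i)) bin2_sum.
by rewrite -[m.-1]bin1 mul_bin_diag.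
Qed.

Lemma sum_batch_start_ge k c m : 0 < c -> k * c.-1 <= m.-1 ->
  k.-1 * (m * m.-1) <= 2 * k * \sum_(i < m) batch_start c i.
Proof.
move=> c_gt0 le_kc_m.
have sum_divn_eq :
    \sum_(i < m) i = \sum_(i < m) batch_start c i + \sum_(i < m) i %% c.
  by rewrite -big_split; apply: eq_bigr => i _; apply: divn_eq.
have := double_sum_modn m c_gt0; have := double_sum_ord m; move: sum_divn_eq.
move: (\sum_(i < m) i) (\sum_(i < m) batch_start c i) (\sum_(i < m) i %% c).
move=> T S B; have := leq_mul (leqnn m) le_kc_m.
by have := ltn_pmod m c_gt0; move: (m %% c) => r; nia.
Qed.

Lemma iota0S t : iota 0 t.+1 = rcons (iota 0 t) t.
Proof. by rewrite -cats1 -addn1 iotaD. Qed.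

Lemma count_iota0 (P : pred nat) m : count P (iota 0 m) = \sum_(i < m) P i.
Proof.
elim: m => [|m IHm]; first by rewrite big_ord0.
by rewrite iota0S -cats1 count_cat big_ord_recr IHm /= addn0.
Qed.

Lemma sum_count_fiber_le (f : nat -> nat) (P : pred nat) (s : seq nat) k :
  \sum_(u <- iota 0 k) count (fun i => (f i == u) && P i) s <= count P s.
Proof.
elim: s => [|x s IHs] /=; first by rewrite big1.
rewrite big_split /= leq_add //; case: (P x); last first.
  by rewrite big1 // => u; rewrite andbF.
rewrite (eq_bigr (fun u => if u == f x then 1 else 0)) => [|u _]; last first.
  by rewrite andbT eq_sym.
by rewrite -big_mkcond sum1_count count_uniq_mem ?iota_uniq ?leq_b1.
Qed.

Lemma sum_ord_eq_lt (x b : nat) : \sum_(t < b) (x == t) = (x < b).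
Proof.
rewrite (eq_bigr (fun t : 'I_b => if t == x :> nat then 1 else 0)) => [|t _].
  by rewrite -big_mkcond (big_ord1_eq _ (fun=> 1)); case: ifP.
by rewrite eq_sym.
Qed.

Definition answer_eqb (a b : answer) : bool :=
  match a, b with ALt, ALt | AEq, AEq | AGt, AGt => true | _, _ => false end.

Lemma answer_eqP : Equality.axiom answer_eqb.
Proof. by do 2 case; constructor. Qed.

HB.instance Definition _ := hasDecEq.Build answer answer_eqP.

Lemma eq_answer_of n (s : 'S_n) j r : (answer_of s (j, r) == AEq) = ((s j).+1 == r).
Proof. by rewrite /answer_of /=; case: ltngtP. Qed.

Definition found n (h : transcript n) : bool :=
  has (fun qa : query n * answer => qa.2 == AEq) (flatten h).

Lemma found_cat n (h1 h2 : transcript n) : found (h1 ++ h2) = found h1 || found h2.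
Proof. by rewrite /found flatten_cat has_cat. Qed.

Definition hits n (h : transcript n) : seq 'I_n :=
  [seq qa.1.1 | qa <- flatten h & qa.2 == AEq].

Lemma found_hits n (h : transcript n) : found h = (hits h != [::]).
Proof. by rewrite /found has_count -size_filter /hits; case: filter. Qed.

Definition batch_search n (cand : nat -> 'I_n) (m c r : nat) : algorithm n :=
  Algorithm
    (fun h => if found h then [::]
              else [seq (cand i, r) | i <- iota 0 m & i %/ c == size h])
    (fun h => head (cand m) (hits h)).

Section BatchSearch.
Variables (n : nat) (cand : nat -> 'I_n) (m c r : nat) (s : 'S_n) (pos : nat).
Hypothesis rank_cand : forall i, i < m -> ((s (cand i)).+1 == r) = (i == pos).

Definition found_before u := (pos < m) && (pos %/ c < u).

Definition batch_round u : seq (query n * answer) :=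
  if found_before u then [::]
  else [seq ((cand i, r), answer_of s (cand i, r)) | i <- iota 0 m & i %/ c == u].

Lemma has_hit_batch_round u :
  has (fun qa : query n * answer => qa.2 == AEq) (batch_round u)
  = ~~ found_before u && (pos < m) && (pos %/ c == u).
Proof.
rewrite /batch_round; case: found_before => //=; rewrite has_map /preim /=.
apply/hasP/andP => [[i]|[pos_lt /eqP <-]].
  rewrite mem_filter mem_iota add0n /= eq_answer_of => /andP[/eqP <- lt_im].
  by rewrite (rank_cand lt_im) => /eqP <-.
by exists pos; rewrite ?mem_filter ?mem_iota ?eqxx //= eq_answer_of rank_cand.
Qed.

Lemma found_batch_rounds t : found [seq batch_round u | u <- iota 0 t] = found_before t.
Proof.
elim: t => [|t IHt]; first by rewrite /found_before andbF.
rewrite iota0S map_rcons -cats1 found_cat IHt /found /= cats0.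
rewrite has_hit_batch_round /found_before ltnS.
by case: (pos < m); rewrite //=; case: ltngtP.
Qed.

Lemma run_batch_search k :
  run_rounds (batch_search cand m c r) s k = [seq batch_round u | u <- iota 0 k].
Proof.
elim: k => [//|k IHk].
rewrite iota0S map_rcons /= IHk found_batch_rounds size_map size_iota.
by rewrite /batch_round; case: found_before; rewrite //= -map_comp.
Qed.

Lemma num_queries_batch_search k :
  num_queries (batch_search cand m c r) k s <= \sum_(i < m) (batch_start c i <= pos).
Proof.
rewrite -(count_iota0 (fun i => batch_start c i <= pos)) /num_queries.
rewrite run_batch_search -map_comp sumnE big_map.
apply: leq_trans (sum_count_fiber_le (fun i => i %/ c) _ _ k).
apply: leq_sum => u _ /=; rewrite /batch_round /found_before.
case: ifP => [//|/negbT]; rewrite size_map size_filter negb_and -!leqNgt => not_found.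
apply/eq_leq/eq_in_count => i; rewrite mem_iota => /andP[_ lt_im] /=.
case: eqP => //= def_u; subst u; symmetry; case/orP: not_found => [le_m_pos|le_i_pos].
  by rewrite (leq_trans (leq_trunc_div i c)) // (leq_trans (ltnW lt_im)).
by rewrite (leq_trans _ (leq_trunc_div pos c)) // leq_mul2r le_i_pos orbT.
Qed.

Lemma hits_batch_search_rank k j :
  j \in hits (run_rounds (batch_search cand m c r) s k) -> (s j).+1 = r.
Proof.
rewrite run_batch_search => /mapP[qa]; rewrite mem_filter => /andP[hit].
move=> /flattenP[rd /mapP[u _ ->]]; rewrite /batch_round; case: found_before => //.
by move=> /mapP[i _ def_qa] ->; move: hit; rewrite def_qa eq_answer_of => /eqP.
Qed.

Lemma succeeds_batch_search k : 0 < c -> m <= k * c -> pos <= m ->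
  (s (cand pos)).+1 = r -> succeeds (batch_search cand m c r) k r s.
Proof.
move=> c_gt0 le_m_kc le_pos_m rank_pos; apply/eqP; rewrite /alg_output /=.
case hits_run: hits => [|j js] /=; last first.
  by apply: (hits_batch_search_rank (k := k)); rewrite hits_run mem_head.
have : ~~ found (run_rounds (batch_search cand m c r) s k).
  by rewrite found_hits hits_run.
rewrite run_batch_search found_batch_rounds /found_before ltn_divLR //.
by rewrite negb_and -!leqNgt => /orP pos_ge; rewrite (_ : m = pos) //; lia.
Qed.

End BatchSearch.

Local Open Scope ring_scope.

Lemma natr_pred (R : pzRingType) m : (0 < m)%N -> (m.-1)%:R = m%:R - 1 :> R.
Proof. by case: m => // m _; rewrite /= mulrSr addrK. Qed.

Lemma natr_mul_pred (R : comPzRingType) m : (m * m.-1)%:R = m%:R * (m%:R - 1) :> R.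
Proof. by case: m => [|m]; rewrite ?mul0r // natrM natr_pred. Qed.

Lemma prefix_mean_ge (R : realFieldType) (a : nat -> R) (n b : nat) :
  (forall t u, (t <= u < n)%N -> a u <= a t) -> (b <= n)%N ->
  b%:R * \sum_(t < n) a t <= n%:R * \sum_(t < b) a t.
Proof.
move=> a_noninc le_bn.
suff sum_le d : (b + d <= n)%N ->
    b%:R * \sum_(t < b + d) a t <= (b + d)%:R * \sum_(t < b) a t.
  by have := sum_le (n - b)%N; rewrite subnKC //; apply.
elim: d => [|d IHd] le_bdn; first by rewrite addn0.
rewrite addnS big_ord_recr /= mulrDr.
have : b%:R * a (b + d)%N <= \sum_(t < b) a t.
  rewrite mulr_natl -[b in _ *+ b]card_ord -sumr_const; apply: ler_sum => t _.
  by apply: a_noninc; have := ltn_ord t; lia.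
by have := IHd ltac:(lia); rewrite -addn1 natrD mulrDl; lra.
Qed.

Lemma exists_nat_bracket_lt (R : archiFieldType) (N : nat) (x : R) :
  (0 < N)%N -> 0 <= x <= N%:R -> exists2 m : nat, (m < N)%N & m%:R <= x <= m.+1%:R.
Proof.
move=> N_gt0 /andP[x_ge0 x_le_N]; have /andP[trunc_le lt_trunc] := truncn_itv x_ge0.
have [trunc_lt|N_le_trunc] := ltnP (Num.truncn x) N.
  by exists (Num.truncn x); rewrite ?trunc_le ?ltW.
exists N.-1; rewrite ?prednK // x_le_N andbT (le_trans _ trunc_le) // ler_nat.
exact: leq_trans (leq_pred N) N_le_trunc.
Qed.

Lemma batch_cost_le (R : realFieldType) (n k m S : nat) (p : R) :
  (0 < n)%N -> (0 < k)%N -> 0 <= p <= 1 -> m%:R <= n%:R * p ->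
  (k.-1 * (m * m.-1) <= 2 * k * S)%N ->
  m%:R - S%:R / n%:R <= n%:R * p * (1 - (k%:R - 1) / (2 * k%:R) * p) + 1.
Proof.
move=> n_gt0 k_gt0 /andP[p_ge0 p_le1] le_m_np.
rewrite -(ler_nat R) natrM natr_mul_pred !natrM natr_pred // => le_S.
have n_pos : 0 < n%:R :> R by rewrite ltr0n.
have k_ge1 : 1 <= k%:R :> R by rewrite ler1n.
set x := n%:R * p in le_m_np *; pose a : R := (k%:R - 1) / (2 * k%:R * n%:R).
have x_le_n : x <= n%:R by rewrite /x ler_piMr.
have a_ge0 : 0 <= a by apply: divr_ge0; nra.
have a_n : a * (2 * n%:R) <= 1 by rewrite /a mulrAC ler_pdivrMr ?mul1r; nra.
have -> : x * (1 - (k%:R - 1) / (2 * k%:R) * p) = x - a * x ^+ 2.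
  by rewrite /a /x; field; rewrite !pnatr_eq0 -!lt0n n_gt0 k_gt0.
have S_ge : a * (m%:R * (m%:R - 1)) <= S%:R / n%:R.
  rewrite ler_pdivlMr // /a.
  have -> : (k%:R - 1) / (2 * k%:R * n%:R) * (m%:R * (m%:R - 1)) * n%:R
          = (k%:R - 1) * (m%:R * (m%:R - 1)) / (2 * k%:R) :> R.
    by field; rewrite !pnatr_eq0 -!lt0n n_gt0 k_gt0.
  by rewrite ler_pdivrMr; nra.
(* y |-> y - a y^2 is nondecreasing on [0, n] as 2 a n <= 1, and m <= x. *)
have : 0 <= (x - m%:R) * (1 - a * (x + m%:R)) by apply: mulr_ge0; nra.
have : a * m%:R <= 1 by nra.
nra.
Qed.

Section Candidates.
Variables (R : realType) (n : nat) (D : {ffun 'S_n -> R}) (r0 : 'I_n).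
Hypotheses (D_ge0 : forall s, 0 <= D s) (D_sum1 : \sum_s D s = 1).

Definition prob (E : pred 'S_n) : R := \sum_s D s * (E s)%:R.

Lemma prob_le (E F : pred 'S_n) : (forall s, E s -> F s) -> prob E <= prob F.
Proof.
move=> EF; apply: ler_sum => s _; apply: ler_wpM2l => //.
by case: (boolP (E s)) => [/EF ->|].
Qed.

Lemma eq_prob (E F : pred 'S_n) : E =1 F -> prob E = prob F.
Proof. by move=> EF; apply: eq_bigr => s _; rewrite EF. Qed.

Lemma probC (E : pred 'S_n) : prob (predC E) = 1 - prob E.
Proof.
rewrite /prob -[X in X - _]D_sum1 -sumrB; apply: eq_bigr => s _.
by rewrite /=; case: (E s); rewrite ?mulr1 ?mulr0 ?subrr ?subr0.
Qed.

Definition hit_prob (j : 'I_n) : R := prob (fun s => (s^-1)%g r0 == j).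

Definition candidates : seq 'I_n :=
  sort (fun i j => hit_prob j <= hit_prob i) (enum 'I_n).

Definition cand (i : nat) : 'I_n := nth r0 candidates i.

Definition position (s : 'S_n) : nat := index ((s^-1)%g r0) candidates.

Lemma size_candidates : size candidates = n.
Proof. by rewrite size_sort size_enum_ord. Qed.

Lemma uniq_candidates : uniq candidates.
Proof. by rewrite sort_uniq enum_uniq. Qed.

Lemma mem_candidates j : j \in candidates.
Proof. by rewrite mem_sort mem_enum. Qed.

Lemma position_lt s : (position s < n)%N.
Proof. by rewrite -size_candidates index_mem mem_candidates. Qed.

Lemma index_candidates j t : (t < n)%N -> (index j candidates == t) = (j == cand t).
Proof.
move=> t_lt; apply/eqP/eqP => [<-|->]; first by rewrite /cand nth_index ?mem_candidates.
by rewrite index_uniq ?size_candidates ?uniq_candidates.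
Qed.

Lemma cand_rank (s : 'S_n) i :
  (i < n)%N -> ((s (cand i)).+1 == r0.+1) = (i == position s).
Proof.
move=> i_lt; rewrite eqSS val_eqE -(inj_eq (@perm_inj _ s^-1%g)) permK.
by rewrite [LHS]eq_sym -index_candidates // [RHS]eq_sym.
Qed.

Lemma cand_position (s : 'S_n) : (s (cand (position s))).+1 = r0.+1.
Proof. by apply/eqP; rewrite cand_rank ?position_lt. Qed.

Lemma prob_position_eq t :
  (t < n)%N -> prob (fun s => position s == t) = hit_prob (cand t).
Proof. by move=> t_lt; apply: eq_bigr => s _; rewrite /position index_candidates. Qed.

Lemma prob_position_nonincreasing t u : (t <= u < n)%N ->
  prob (fun s => position s == u) <= prob (fun s => position s == t).
Proof.
case/andP=> le_tu lt_un; have lt_tn := leq_ltn_trans le_tu lt_un.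
rewrite !prob_position_eq //.
apply: (sorted_leq_nth (leT := fun i j => hit_prob j <= hit_prob i)) le_tu.
- by move=> j i l /= le_ij le_li; apply: le_trans le_li le_ij.
- by move=> i /=.
- by apply: sort_sorted => i j; apply: le_total.
- by rewrite inE size_candidates.
- by rewrite inE size_candidates.
Qed.

Lemma prob_position_lt b :
  prob (fun s => position s < b)%N = \sum_(t < b) prob (fun s => position s == t).
Proof.
rewrite /prob exchange_big; apply: eq_bigr => s _.
by rewrite -mulr_sumr -natr_sum sum_ord_eq_lt.
Qed.

Lemma prob_position_lt_ge b :
  (b <= n)%N -> b%:R <= n%:R * prob (fun s => position s < b)%N.
Proof.
move=> le_bn.
have := prefix_mean_ge (a := fun t => prob (fun s => position s == t)) _ le_bn.
rewrite -!prob_position_lt.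
have -> : prob (fun s => position s < n)%N = 1.
  by rewrite -D_sum1; apply: eq_bigr => s _; rewrite position_lt mulr1.
by rewrite mulr1; apply=> t u; apply: prob_position_nonincreasing.
Qed.

Lemma prob_batch_start_le i c : (i < n)%N ->
  prob (fun s => batch_start c i <= position s)%N <= 1 - (batch_start c i)%:R / n%:R.
Proof.
move=> lt_in; have n_gt0 : (0 < n)%N by apply: leq_ltn_trans lt_in.
rewrite (@eq_prob _ (predC (fun s => position s < batch_start c i)%N)) => [|s]; last first.
  by rewrite /= leqNgt.
rewrite probC lerD2l lerN2 ler_pdivrMr ?ltr0n // [_ * n%:R]mulrC.
by apply/prob_position_lt_ge/(leq_trans (leq_trunc_div i c))/ltnW.
Qed.

Lemma batch_search_success_prob m c k : (0 < c)%N -> (m < n)%N -> (m <= k * c)%N ->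
  m.+1%:R <= n%:R * success_prob D (batch_search cand m c r0.+1) k r0.+1.
Proof.
move=> c_gt0 lt_mn le_m_kc; apply: le_trans (prob_position_lt_ge lt_mn) _.
rewrite ler_wpM2l //; apply: (@prob_le _ (succeeds _ k r0.+1)) => s le_pos_m.
apply: (succeeds_batch_search (pos := position s)) => //; last exact: cand_position.
by move=> i lt_im; apply: cand_rank; apply: ltn_trans lt_mn.
Qed.

Lemma batch_search_expected_queries m c k : (m <= n)%N ->
  expected_queries D (batch_search cand m c r0.+1) k
    <= m%:R - (\sum_(i < m) batch_start c i)%:R / n%:R.
Proof.
move=> le_mn.
apply: (@le_trans _ _ (\sum_(i < m) prob (fun s => batch_start c i <= position s)%N)).
  rewrite /prob exchange_big; apply: ler_sum => s _ /=.
  rewrite -mulr_sumr -natr_sum ler_wpM2l // ler_nat.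
  apply: (@num_queries_batch_search _ _ _ _ _ _ (position s)) => i lt_im.
  by apply: cand_rank; apply: leq_trans le_mn.
have prob_le_i (i : 'I_m) := prob_batch_start_le c (leq_trans (ltn_ord i) le_mn).
apply: le_trans (ler_sum _ (fun i _ => prob_le_i i)) _.
by rewrite sumrB sumr_const card_ord -mulr_suml -natr_sum.
Qed.

End Candidates.

Theorem proposition9 (R : realType) (n k r : nat) (D : {ffun 'S_n -> R}) (p : R) :
  (1 <= n)%N -> (1 <= k)%N -> (1 <= r <= n)%N ->
  is_distribution D -> 0 <= p <= 1 ->
  exists A : algorithm n,
    p <= success_prob D A k r /\
    expected_queries D A k <=
      n%:R * p * (1 - (k%:R - 1) / (2 * k%:R) * p) + 1.
Proof.
move=> n_gt0 k_gt0 /andP[r_gt0 le_rn] [D_ge0 D_sum1] p01.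
have [r0 ->] : exists r0 : 'I_n, r = r0.+1.
  have lt_r1n : (r.-1 < n)%N by rewrite prednK.
  by exists (Ordinal lt_r1n); rewrite /= prednK.
have np01 : 0 <= n%:R * p <= n%:R.
  by case/andP: p01 => p_ge0 p_le1; rewrite mulr_ge0 ?ler_piMr // ltW.
have [m lt_mn /andP[le_m_np le_np_m1]] := exists_nat_bracket_lt n_gt0 np01.
pose c := (m.-1 %/ k).+1.
have le_m_kc : (m <= k * c)%N by have := ltn_ceil m.-1 k_gt0; rewrite mulnC; lia.
have le_kc_m : (k * c.-1 <= m.-1)%N by rewrite mulnC leq_trunc_div.
exists (batch_search (cand D r0) m c r0.+1); split.
  rewrite -(@ler_pM2l _ n%:R) ?ltr0n //; apply: le_trans le_np_m1 _.
  exact: batch_search_success_prob.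
apply: le_trans (batch_search_expected_queries _ _ _ _ _ (ltnW lt_mn)) _ => //.
by apply: batch_cost_le => //; apply: sum_batch_start_ge.
Qed.
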